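(* For any $n\in\mathbb{N}$, $A>0$ and $\lambda\in[-1,1]$, there exists $f\in C[-1,1]$, nonnegative on $[-1,1]$, such that every algebraic polynomial $P_n$ of degree $\le n$ which is nonnegative on $[-1,1]$ and satisfies $P_n(\lambda)=f(\lambda)$ obeys $$\|f-P_n\|>A\,\omega_3(f,1).$$
   Context: $\|\cdot\|$ is the sup norm on $[-1,1]$; $\omega_3(f,t)$ is the third modulus of smoothness of $f$ on $[-1,1]$. *)

From HB Require Import structures.
From mathcomp Require Import all_boot all_order all_algebra.
From mathcomp Require Import all_classical all_reals all_analysis.
Set Implicit Arguments. Unset Strict Implicit. Unset Printing Implicit Defensive.
Import Order.TTheory GRing.Theory Num.Theory.
Import numFieldNormedType.Exports.
Local Open Scope classical_set_scope.
Local Open Scope ring_scope.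

Definition supnorm11 (R : realType) (g : R -> R) : R :=
  sup [set `|g x| | x in `[-1, 1]].

Definition diff3 (R : realType) (f : R -> R) (h x : R) : R :=
  f (x + 3%:R * h) - 3%:R * f (x + 2%:R * h) + 3%:R * f (x + h) - f x.

Definition omega3 (R : realType) (f : R -> R) (t : R) : R :=
  sup [set `|diff3 f hx.1 hx.2| | hx in
        [set hx : R * R | 0 < hx.1 <= t /\ -1 <= hx.2 /\ hx.2 + 3%:R * hx.1 <= 1]].

From HB Require Import structures.
From mathcomp Require Import all_boot all_order all_algebra.
From mathcomp Require Import all_classical all_reals all_analysis.
From mathcomp Require Import ring lra.
Set Implicit Arguments.
Unset Strict Implicit.
Unset Printing Implicit Defensive.
Import Order.TTheory GRing.Theory Num.Theory.
Import numFieldNormedType.Exports.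
Local Open Scope classical_set_scope.
Local Open Scope ring_scope.

(* Let s = +-1 point from lambda into [-1, 1] and, for small d > 0, take
   f = max(0, q) with q x = (x - lambda) (x - lambda - 2 d s).  Then
   |f - q| <= d^2 and third differences kill q, so omega_3(f, 1) <= 8 d^2.
   A polynomial P >= 0 on [-1, 1] with P(lambda) = 0 is (x - lambda) S(x)
   with s S(lambda) >= 0, so T = (P - q) / (x - lambda) =
   S - (x - lambda - 2 d s) satisfies |T(lambda)| >= 2 d.  Since T has
   degree <= n + 1, its values at n + 2 nodes of lambda + s (0, 1] control
   T(lambda), whence ||P - q|| >= c d with c depending only on n and lambda,
   and ||f - P|| >= c d - d^2 > 8 A d^2. *)

Lemma size_divp_XsubC (R : fieldType) (p : {poly R}) (a : R) :
  size (p %/ ('X - a%:P)) = (size p).-1.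
Proof. by rewrite size_divp ?polyXsubC_eq0 // size_XsubC subn1. Qed.

Lemma horner_divp_XsubC (R : fieldType) (p : {poly R}) (a x : R) :
  p.[x] = p.[a] + (p %/ ('X - a%:P)).[x] * (x - a).
Proof.
by rewrite {1}(divp_eq p ('X - a%:P)) modp_XsubC !hornerE addrC.
Qed.

Lemma horner_le_node_bound (R : realFieldType) (n : nat) (a eps : R)
    (y : nat -> R) :
  0 < eps ->
  (forall i j, (i < n)%N -> (j < n)%N -> i != j -> eps <= `|y i - y j|) ->
  exists2 C : R, 0 <= C & forall (T : {poly R}) (M : R), (size T <= n)%N ->
    (forall i, (i < n)%N -> `|T.[y i]| <= M) -> `|T.[a]| <= C * M.
Proof.
move=> eps_gt0; elim: n y => [|n IH] y y_sep.
  exists 0 => // T M; rewrite leqn0 size_poly_eq0 => /eqP -> _.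
  by rewrite horner0 normr0 mul0r.
have [C C_ge0 HC] := IH (y \o succn) (fun i j => y_sep i.+1 j.+1).
exists (1 + 2 * `|a - y 0%N| * C / eps).
  by apply: addr_ge0 => //; apply: divr_ge0 (ltW eps_gt0); rewrite mulr_ge0.
move=> T M size_T T_le.
set T1 := T %/ ('X - (y 0%N)%:P).
have T0_le := T_le 0%N isT.
have T1_le : `|T1.[a]| <= C * (2 * M / eps).
  apply: HC; first by rewrite size_divp_XsubC -subn1 leq_subLR add1n.
  move=> i lt_in /=; rewrite ler_pdivlMr //.
  apply: le_trans (ler_wpM2l (normr_ge0 _) (y_sep i.+1 0%N lt_in isT isT)) _.
  rewrite -normrM.
  have -> : T1.[y i.+1] * (y i.+1 - y 0%N) = T.[y i.+1] - T.[y 0%N].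
    by rewrite (horner_divp_XsubC T (y 0%N) (y i.+1)) addrAC subrr add0r.
  apply: le_trans (ler_normB _ _) _.
  have := T_le i.+1 lt_in; lra.
rewrite (horner_divp_XsubC T (y 0%N)); apply: le_trans (ler_normD _ _) _.
have -> : (1 + 2 * `|a - y 0%N| * C / eps) * M
          = M + C * (2 * M / eps) * `|a - y 0%N| by field; rewrite gt_eqF.
by rewrite normrM lerD // ler_wpM2r.
Qed.

Lemma ge0_from_right (R : realType) (f : R -> R) (a s : R) :
  {for a, continuous f} -> (forall t, 0 < t <= 1 -> 0 <= f (a + s * t)) ->
  0 <= f a.
Proof.
move=> f_cont f_ge0.
have f_cvg : f (a + s * t) @[t --> 0^'+] --> f a.
  apply: cvg_at_right_filter.
  have {2}-> : a = a + s * 0 by rewrite mulr0 addr0.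
  apply: (continuous_comp (f := fun t => a + s * t)).
    apply: cvgD; first exact: cvg_cst.
    by apply: cvgM; [exact: cvg_cst | exact: cvg_id].
  by rewrite mulr0 addr0.
apply: (cvgr_to_ge f_cvg); near=> t; apply: f_ge0; apply/andP; split.
- by near: t; exact: nbhs_right_gt.
- by near: t; exact: nbhs_right_le.
Unshelve. all: by end_near.
Qed.

Lemma exists_inward_direction (R : realType) (lam : R) : lam \in `[-1, 1] ->
  exists2 s : R, `|s| = 1 & forall t, 0 <= t <= 1 -> lam + s * t \in `[-1, 1].
Proof.
rewrite !in_itv /= => /andP[lam_ge lam_le].
have [lam_le0|lam_gt0] := lerP lam 0.
- exists 1 => [|t /andP[t_ge0 t_le1]]; first exact: normr1.
  by rewrite in_itv /=; apply/andP; split; lra.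
- exists (-1) => [|t /andP[t_ge0 t_le1]]; first by rewrite normrN normr1.
  by rewrite in_itv /=; apply/andP; split; lra.
Qed.

Section NonnegPolyNearRoot.
Variables (R : realType) (n : nat) (lam s : R).
Hypotheses (s_unit : `|s| = 1)
  (inward : forall t, 0 <= t <= 1 -> lam + s * t \in `[-1, 1]).

Let s_sqr : s ^+ 2 = 1.
Proof. by apply/eqP; rewrite sqr_norm_eq1 s_unit. Qed.

Lemma root_slope_ge0 (P S : {poly R}) :
  (forall x, x \in `[-1, 1] -> 0 <= P.[x]) ->
  (forall x, P.[x] = S.[x] * (x - lam)) -> 0 <= s * S.[lam].
Proof.
move=> P_ge0 P_eq; rewrite -hornerZ.
apply: (ge0_from_right (s := s)) => [|t /andP[t_gt0 t_le1]].
  exact: continuous_horner.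
have z_in : lam + s * t \in `[-1, 1] by apply: inward; rewrite ltW.
have := P_ge0 _ z_in; rewrite P_eq hornerZ.
have -> : S.[lam + s * t] * (lam + s * t - lam) = s * S.[lam + s * t] * t.
  by ring.
by rewrite (pmulr_lge0 _ t_gt0).
Qed.

Let eps : R := n.+3%:R^-1.
Let node (i : nat) : R := lam + s * (i.+1%:R * eps).

Let eps_gt0 : 0 < eps.
Proof. by rewrite invr_gt0. Qed.

Let node_in i : (i < n.+2)%N -> node i \in `[-1, 1].
Proof.
move=> lt_i; apply: inward; apply/andP; split; first exact/mulr_ge0/ltW.
by rewrite ler_pdivrMr ?ltr0Sn // mul1r ler_nat leqW.
Qed.

Let node_sep i j : i != j -> eps <= `|node i - node j|.
Proof.
move=> neq_ij; have -> : node i - node j = s * (i.+1%:R - j.+1%:R) * eps.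
  by rewrite /node; ring.
rewrite !normrM s_unit mul1r (gtr0_norm eps_gt0) ler_pMl //.
have [lt_ij|lt_ji|eq_ij] := ltngtP i j; last by rewrite eq_ij eqxx in neq_ij.
- by rewrite distrC -(natrB _ (leqW lt_ij)) normr_nat ler1n subn_gt0.
- by rewrite -(natrB _ (leqW lt_ji)) normr_nat ler1n subn_gt0.
Qed.

Lemma nonneg_poly_far_from_quadratic :
  exists2 c : R, 0 < c & forall (P : {poly R}) (d M : R),
    (size P <= n.+1)%N -> (forall x, x \in `[-1, 1] -> 0 <= P.[x]) ->
    P.[lam] = 0 ->
    (forall x, x \in `[-1, 1] ->
       `|P.[x] - (x - lam) * (x - (lam + 2 * d * s))| <= M) ->
    c * d <= M.
Proof.
have [C C_ge0 interp] := @horner_le_node_bound R n.+2 lam eps node eps_gt0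
  (fun i j _ _ => @node_sep i j).
exists (2 / ((C + 1) * n.+3%:R)).
  by rewrite divr_gt0 // mulr_gt0 // ltr_wpDl.
move=> P d M size_P P_ge0 P_lam P_near.
have lam_in : lam \in `[-1, 1].
  by rewrite -[lam]addr0 -[0](mulr0 s) inward ?lexx ?ler01.
have M_ge0 : 0 <= M by apply: le_trans (P_near lam lam_in).
pose S := P %/ ('X - lam%:P).
have P_eq x : P.[x] = S.[x] * (x - lam).
  by rewrite (horner_divp_XsubC P lam) P_lam add0r.
pose T := S - ('X - (lam + 2 * d * s)%:P).
have T_eq x :
    P.[x] - (x - lam) * (x - (lam + 2 * d * s)) = T.[x] * (x - lam).
  by rewrite P_eq /T !hornerE; ring.
have size_T : (size T <= n.+2)%N.
  rewrite (leq_trans (size_polyD _ _)) // size_polyN size_XsubC geq_max andbT.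
  by rewrite /S size_divp_XsubC (leq_trans (leq_pred _)) // leqW.
have T_node i : (i < n.+2)%N -> `|T.[node i]| <= n.+3%:R * M.
  move=> lt_i; have := P_near _ (node_in lt_i).
  rewrite T_eq normrM /node (addrC lam) addrK normrM s_unit mul1r.
  rewrite (gtr0_norm (mulr_gt0 _ eps_gt0)) // -ler_pdivlMr ?mulr_gt0 //.
  move/le_trans; apply; rewrite invfM /eps invrK mulrCA [leRHS]mulrC.
  by apply: ler_piMl; [exact: mulr_ge0 | rewrite invf_le1 ?ler1n].
have T_lam := interp T _ size_T T_node.
have slope := root_slope_ge0 P_ge0 P_eq.
have sT_lam : s * T.[lam] = s * S.[lam] + 2 * d * s ^+ 2.
  by rewrite /T hornerD hornerN hornerXsubC; ring.
rewrite s_sqr mulr1 in sT_lam.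
have sT_le : s * T.[lam] <= `|T.[lam]|.
  by apply: le_trans (ler_norm _) _; rewrite normrM s_unit mul1r.
rewrite mulrAC ler_pdivrMr ?mulr_gt0 ?ltr_wpDl //.
have : C * (n.+3%:R * M) <= (C + 1) * n.+3%:R * M.
  by rewrite -mulrA ler_wpM2r ?mulr_ge0 // lerDl.
lra.
Qed.

End NonnegPolyNearRoot.

Definition hinge (R : realType) (a b x : R) : R :=
  Num.max 0 ((x - a) * (x - b)).

Lemma hinge_ge0 (R : realType) (a b x : R) : 0 <= hinge a b x.
Proof. by rewrite /hinge le_max lexx. Qed.

Lemma continuous_hinge (R : realType) (a b : R) : continuous (hinge a b).
Proof.
move=> x; apply: (@continuous_max _ _ (fun=> 0) (fun x => (x - a) * (x - b))).
  exact: cst_continuous.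
by apply: continuousM; apply: continuousB => //; exact: cst_continuous.
Qed.

Lemma hinge_sub_quadratic (R : realType) (a b x : R) :
  `|hinge a b x - (x - a) * (x - b)| <= ((b - a) / 2) ^+ 2.
Proof.
rewrite /hinge; have [q_ge0|q_lt0] := leP 0 ((x - a) * (x - b)).
  by rewrite subrr normr0 sqr_ge0.
rewrite sub0r normrN ltr0_norm // lerNl.
have -> : (x - a) * (x - b) = (x - (a + b) / 2) ^+ 2 - ((b - a) / 2) ^+ 2.
  by field.
by rewrite lerBrDr addNr sqr_ge0.
Qed.

Lemma diff3_quadratic (R : realType) (a b h x : R) :
  diff3 (fun y => (y - a) * (y - b)) h x = 0.
Proof. by rewrite /diff3; ring. Qed.

Lemma diff3_le_near (R : realType) (f q : R -> R) (delta h x : R) :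
  diff3 q h x = 0 -> (forall y, `|f y - q y| <= delta) ->
  `|diff3 f h x| <= 8 * delta.
Proof.
move=> q_h f_near; rewrite -[diff3 f h x]subr0 -q_h /diff3.
move: (f_near (x + 3%:R * h)) (f_near (x + 2%:R * h)).
move: (f_near (x + h)) (f_near x).
rewrite !ler_norml => /andP[? ?] /andP[? ?] /andP[? ?] /andP[? ?].
apply/andP; split; lra.
Qed.

Lemma omega3_le (R : realType) (f : R -> R) (t B : R) :
  0 <= B -> (forall h x, `|diff3 f h x| <= B) -> omega3 f t <= B.
Proof.
move=> B_ge0 diff3_le; rewrite /omega3.
set E := [set _ | _ in _].
have [->|/set0P E_neq0] := eqVneq E set0; first by rewrite sup0.
by apply: ge_sup => // _ [hx _ <-].
Qed.

Lemma normr_le_supnorm11 (R : realType) (g : R -> R) (x : R) :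
  {within `[-1, 1], continuous g} -> x \in `[-1, 1] -> `|g x| <= supnorm11 g.
Proof.
move=> g_cont x_in; apply: ub_le_sup; last by exists x.
have norm_g_cont := within_continuous_comp _ _ _
  (fun y _ => @norm_continuous _ R^o y) g_cont.
have [|c _ c_max] := EVT_max _ norm_g_cont; first lra.
by exists `|g c| => _ [y y_in <-]; apply: c_max.
Qed.

Lemma normr_sub_le_supnorm11 (R : realType) (f g q : R -> R) (delta x : R) :
  {within `[-1, 1], continuous (fun y => f y - g y)} ->
  (forall y, `|f y - q y| <= delta) -> x \in `[-1, 1] ->
  `|g x - q x| <= supnorm11 (fun y => f y - g y) + delta.
Proof.
move=> fg_cont f_near x_in.
have -> : g x - q x = (f x - q x) - (f x - g x) by ring.
apply: le_trans (ler_normB _ _) _; rewrite addrC.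
by apply: lerD; [exact: (normr_le_supnorm11 fg_cont x_in) | exact: f_near].
Qed.

Theorem lemma3p3 (R : realType) (n : nat) (A lambda : R) :
  0 < A -> lambda \in `[-1, 1] ->
  exists f : R -> R,
    {within `[-1, 1], continuous f} /\
    (forall x, x \in `[-1, 1] -> 0 <= f x) /\
    (forall P : {poly R}, (size P <= n.+1)%N ->
       (forall x, x \in `[-1, 1] -> 0 <= P.[x]) ->
       P.[lambda] = f lambda ->
       supnorm11 (fun x => f x - P.[x]) > A * omega3 f 1).
Proof.
move=> A_gt0 lam_in.
have [s s_unit inward] := exists_inward_direction lam_in.
have [c c_gt0 far] := nonneg_poly_far_from_quadratic n s_unit inward.
pose d := c / (8 * A + 2).
have d_gt0 : 0 < d by rewrite divr_gt0 //; lra.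
pose q x := (x - lambda) * (x - (lambda + 2 * d * s)).
pose f := hinge lambda (lambda + 2 * d * s).
have f_near x : `|f x - q x| <= d ^+ 2.
  apply: le_trans (hinge_sub_quadratic _ _ _) _.
  have -> : (lambda + 2 * d * s - lambda) / 2 = d * s by field.
  by rewrite exprMn (eqP (_ : s ^+ 2 == 1)) ?mulr1 // sqr_norm_eq1 s_unit.
have omega_le : omega3 f 1 <= 8 * d ^+ 2.
  apply: omega3_le => [|h x]; first by rewrite mulr_ge0 ?sqr_ge0.
  exact: diff3_le_near (diff3_quadratic _ _ _ _) f_near.
exists f; split; first exact/continuous_subspaceT/continuous_hinge.
split=> [x _|P size_P P_ge0 P_lam]; first exact: hinge_ge0.
rewrite ltNge; apply/negP => sup_le.
have P_lam0 : P.[lambda] = 0 by rewrite P_lam /f /hinge subrr mul0r maxxx.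
have P_near x : x \in `[-1, 1] -> `|P.[x] - q x| <= (8 * A + 1) * d ^+ 2.
  move=> x_in; apply: le_trans (normr_sub_le_supnorm11 _ f_near x_in) _.
    apply: continuous_subspaceT => y.
    by apply: continuousB; [exact: continuous_hinge | exact: continuous_horner].
  have := ler_wpM2l (ltW A_gt0) omega_le; lra.
have := far P d _ size_P P_ge0 P_lam0 P_near.
rewrite expr2 mulrA ler_pM2r //.
have : (8 * A + 1) * d < c by rewrite /d mulrA ltr_pdivrMr; nra.
lra.
Qed.
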